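(* Let $R$ be a ring. The set $\mathrm{Den}_l(R,0)$, ordered by inclusion and with the product $S_1S_2:=\langle S_1,S_2\rangle$ (the multiplicative subsemigroup of $R$ generated by $S_1$ and $S_2$), is an abelian monoid with identity $\{1\}$ and a complete lattice, in which $S_1S_2=S_1\vee S_2$ for all $S_1,S_2\in\mathrm{Den}_l(R,0)$, and for any family $S_i\in \mathrm{Den}_l(R,0)$, $i\in I$, the meet is $\bigwedge_{i\in I}S_i=\bigvee\{S\in \mathrm{Den}_l(R,0)\mid S\subseteq \bigcap_{i\in I}S_i\}$.
   Context: Rings are associative with $1$. A multiplicatively closed subset $S$ of a ring $R$ is a subset with $1\in S$, $0\notin S$, closed under multiplication. It is a left Ore set if $Sr\cap Rs\neq\emptyset$ for all $r\in R$, $s\in S$; then $\mathrm{ass}(S):=\{r\in R\mid sr=0 \text{ for some } s\in S\}$. A left Ore set $S$ is a left denominator set if $rs=0$ with $r\in R$, $s\in S$ implies $tr=0$ for some $t\in S$. $\mathrm{Den}_l(R,0)$ is the set of left denominator sets $S$ with $\mathrm{ass}(S)=0$ (equivalently, left denominator sets consisting of regular elements). *)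

From HB Require Import structures.
From mathcomp Require Import all_boot all_algebra.
From mathcomp Require Import boolp classical_sets.
Set Implicit Arguments. Unset Strict Implicit. Unset Printing Implicit Defensive.
Import GRing.Theory.
Local Open Scope ring_scope.
Local Open Scope classical_set_scope.

Section Den.
Variable R : nzRingType.

Definition mult_closed (S : set R) : Prop :=
  S 1 /\ ~ S 0 /\ (forall a b, S a -> S b -> S (a * b)).

Definition left_Ore (S : set R) : Prop :=
  mult_closed S /\
  forall (r s : R), S s -> exists (s' r' : R), S s' /\ s' * r = r' * s.

Definition ass (S : set R) : set R := [set r | exists2 s, S s & s * r = 0].

Definition left_denominator (S : set R) : Prop :=
  left_Ore S /\
  forall (r s : R), S s -> r * s = 0 -> exists2 t, S t & t * r = 0.

Definition Den_l0 : set (set R) :=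
  [set S | left_denominator S /\ ass S = [set 0]].

Definition gen_subsemigroup (A : set R) : set R :=
  [set x | forall T : set R, A `<=` T ->
             (forall a b, T a -> T b -> T (a * b)) -> T x].

Definition den_prod (S1 S2 : set R) : set R := gen_subsemigroup (S1 `|` S2).

Definition Den_lub (F : set (set R)) (S : set R) : Prop :=
  Den_l0 S /\ (forall T, F T -> T `<=` S) /\
  (forall U, Den_l0 U -> (forall T, F T -> T `<=` U) -> S `<=` U).

Definition Den_glb (F : set (set R)) (S : set R) : Prop :=
  Den_l0 S /\ (forall T, F T -> S `<=` T) /\
  (forall U, Den_l0 U -> (forall T, F T -> U `<=` T) -> U `<=` S).

End Den.
Arguments Den_l0 : clear implicits.

From HB Require Import structures.
From mathcomp Require Import all_boot all_algebra.
From mathcomp Require Import boolp classical_sets.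
Set Implicit Arguments. Unset Strict Implicit. Unset Printing Implicit Defensive.
Import GRing.Theory.
Local Open Scope ring_scope.
Local Open Scope classical_set_scope.

(* A left denominator set with [ass S = 0] is the same as a multiplicatively
   closed set of regular elements satisfying the left Ore condition, and the
   Ore condition passes from a generating set to the subsemigroup it
   generates.  Hence the subsemigroup generated by [1] and any family of
   members of Den_l(R,0) is again in Den_l(R,0), and it is their join; meets
   are then joins of lower bounds, as in any complete join-semilattice. *)

Section DenominatorSets.
Variable R : nzRingType.
Implicit Types (A S T U : set R) (F : set (set R)).

Definition regular (x : R) : Prop :=
  (forall r, x * r = 0 -> r = 0) /\ (forall r, r * x = 0 -> r = 0).

Definition left_Ore_cond (A S : set R) : Prop :=
  forall r s, A s -> exists s' r', S s' /\ s' * r = r' * s.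

Definition mulr_closed_set S : Prop := forall a b, S a -> S b -> S (a * b).

Lemma regular1 : regular 1.
Proof. by split=> r; rewrite ?mul1r ?mulr1. Qed.

Lemma regularM (x y : R) : regular x -> regular y -> regular (x * y).
Proof.
move=> [x_l x_r] [y_l y_r]; split=> r.
- by rewrite -mulrA => /x_l /y_l.
- by rewrite mulrA => /y_r /x_r.
Qed.

Lemma Den_l0P S :
  Den_l0 R S <->
  [/\ S 1, mulr_closed_set S, (forall s, S s -> regular s) & left_Ore_cond S S].
Proof.
split.
- move=> [[[[S1 [_ SM]] Ore] Den] Ass].
  have S_lreg s r : S s -> s * r = 0 -> r = 0.
    move=> Ss sr0; have : ass S r by exists s.
    by rewrite Ass.
  split=> // s Ss; split=> [r|r rs0]; first exact: S_lreg.
  by have [t St tr0] := Den r s Ss rs0; exact: (S_lreg t).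
- move=> [S1 SM Sreg Ore].
  have S0 : ~ S 0.
    by move=> /Sreg [_ /(_ 1 (mulr0 1)) /eqP]; rewrite oner_eq0.
  split; first split; first split => //.
  + move=> r s Ss rs0; exists 1 => //.
    by have [_ /(_ r rs0) ->] := Sreg s Ss; rewrite mulr0.
  + apply/seteqP; split=> x /=; last by move->; exists 1; rewrite ?mulr0.
    by case=> s /Sreg [+ _]; apply.
Qed.

Lemma Den_l0_1 : Den_l0 R [set 1].
Proof.
apply/Den_l0P; split=> //.
- by move=> a b -> ->; rewrite mulr1.
- by move=> s ->; exact: regular1.
- by move=> r s ->; exists 1, r; rewrite mul1r mulr1.
Qed.

Notation gen := gen_subsemigroup.

Lemma gen_sub A : A `<=` gen A.
Proof. by move=> x Ax T AT _; exact: AT. Qed.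

Lemma gen_mulr_closed A : mulr_closed_set (gen A).
Proof. by move=> a b ga gb T AT TM; apply: (TM a b); [exact: ga|exact: gb]. Qed.

Lemma gen_min A T : A `<=` T -> mulr_closed_set T -> gen A `<=` T.
Proof. by move=> AT TM x; apply. Qed.

Lemma gen_id S : mulr_closed_set S -> gen S = S.
Proof. by move=> SM; apply/seteqP; split; [exact: gen_min|exact: gen_sub]. Qed.

Lemma gen_genUl A B : gen (gen A `|` B) = gen (A `|` B).
Proof.
apply/seteqP; split; apply: gen_min; try exact: gen_mulr_closed.
- move=> x [Ax|Bx]; last by apply: gen_sub; right.
  move: x Ax; apply: gen_min; last exact: gen_mulr_closed.
  by move=> y Ay; apply: gen_sub; left.
- by move=> x [Ax|Bx]; apply: gen_sub; [left; exact: gen_sub|right].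
Qed.

Lemma gen_genUr A B : gen (A `|` gen B) = gen (A `|` B).
Proof. by rewrite setUC gen_genUl setUC. Qed.

Lemma gen_regular A : (forall a, A a -> regular a) -> forall s, gen A s -> regular s.
Proof. by move=> Areg; apply: gen_min Areg _ => a b; exact: regularM. Qed.

(* If [s1] and [s2] satisfy the Ore condition, so does [s2 s1]: apply it to
   [s1] first and then to [s2] with the new left factor. *)
Lemma left_Ore_cond_gen A : left_Ore_cond A (gen A) -> left_Ore_cond (gen A) (gen A).
Proof.
move=> AOre r s gs; move: s gs r; apply: gen_min => [a Aa r|a b Oa Ob r].
  exact: AOre.
have [s1 [r1 [gs1 e1]]] := Ob r.
have [s2 [r2 [gs2 e2]]] := Oa r1.
exists (s2 * s1), r2; split; first exact: gen_mulr_closed.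
by rewrite -mulrA e1 mulrA e2 mulrA.
Qed.

Lemma Den_l0_gen A :
  A 1 -> (forall a, A a -> regular a) -> left_Ore_cond A (gen A) -> Den_l0 R (gen A).
Proof.
move=> A1 Areg AOre; apply/Den_l0P; split.
- exact: gen_sub.
- exact: gen_mulr_closed.
- exact: gen_regular.
- exact: left_Ore_cond_gen.
Qed.

Lemma Den_lub_gen F A :
  (forall T, F T -> Den_l0 R T) -> A 1 ->
  A `<=` [set 1] `|` \bigcup_(T in F) T -> (forall T, F T -> T `<=` A) ->
  Den_lub F (gen A).
Proof.
move=> FDen A1 A_sub F_sub; split; last split.
- apply: Den_l0_gen => // [a /A_sub [->|[T FT Ta]]|r a /A_sub [->|[T FT Ta]]].
  + exact: regular1.
  + by have /Den_l0P [_ _ Treg _] := FDen T FT; exact: Treg.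
  + by exists 1, r; split; [exact: gen_sub|rewrite mul1r mulr1].
  + have /Den_l0P [_ _ _ TOre] := FDen T FT.
    have [s' [r' [Ts' e]]] := TOre r a Ta.
    by exists s', r'; split=> //; apply: gen_sub; exact: (F_sub T).
- by move=> T FT x Tx; apply: gen_sub; exact: (F_sub T).
- move=> U /Den_l0P [U1 UM _ _] F_U; apply: gen_min UM => x /A_sub [->|[T FT]] //.
  exact: F_U.
Qed.

Lemma Den_lub_exists F : (forall T, F T -> Den_l0 R T) -> exists S, Den_lub F S.
Proof.
move=> FDen; exists (gen ([set 1] `|` \bigcup_(T in F) T)).
by apply: Den_lub_gen => // [|T FT x Tx]; [left|right; exists T].
Qed.

Lemma Den_lub_prod S1 S2 :
  Den_l0 R S1 -> Den_l0 R S2 -> Den_lub [set S1; S2] (den_prod S1 S2).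
Proof.
move=> D1 D2; have /Den_l0P [S1_1 _ _ _] := D1.
apply: Den_lub_gen => [T [->|->] //||x [S1x|S2x]|T [->|->]].
- by left.
- by right; exists S1 => //; left.
- by right; exists S2 => //; right.
- exact: subsetUl.
- exact: subsetUr.
Qed.

Lemma Den_glb_lub_lower (I : Type) (Si : I -> set R) S :
  (forall i, Den_l0 R (Si i)) ->
  Den_lub [set T | Den_l0 R T /\ T `<=` \bigcap_(i in setT) Si i] S ->
  Den_glb (range Si) S.
Proof.
move=> SiDen [DS [lower_sub S_least]]; split=> //; split.
- move=> _ [i _ <-]; apply: S_least => // T [_ T_sub] x /T_sub; exact.
- move=> U DU U_lower; apply: lower_sub; split=> // x Ux i _.
  by apply: (U_lower (Si i)) => //; exists i.
Qed.

End DenominatorSets.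

Theorem corollary2p5 (R : nzRingType) :
  (* abelian monoid structure on Den_l(R,0) with product <S1,S2> and identity {1} *)
  Den_l0 R [set 1 : R] /\
  (forall S1 S2, Den_l0 R S1 -> Den_l0 R S2 -> Den_l0 R (den_prod S1 S2)) /\
  (forall S1 S2 S3, Den_l0 R S1 -> Den_l0 R S2 -> Den_l0 R S3 ->
     den_prod (den_prod S1 S2) S3 = den_prod S1 (den_prod S2 S3)) /\
  (forall S1 S2, Den_l0 R S1 -> Den_l0 R S2 -> den_prod S1 S2 = den_prod S2 S1) /\
  (forall S, Den_l0 R S -> den_prod [set 1 : R] S = S /\ den_prod S [set 1 : R] = S) /\
  (* complete lattice w.r.t. inclusion: every family has a join and a meet *)
  (forall (I : Type) (Si : I -> set R), (forall i, Den_l0 R (Si i)) ->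
     (exists S, Den_lub (range Si) S) /\ (exists S, Den_glb (range Si) S)) /\
  (* S1 S2 = S1 \/ S2 *)
  (forall S1 S2, Den_l0 R S1 -> Den_l0 R S2 ->
     Den_lub [set S1; S2] (den_prod S1 S2)) /\
  (* meet formula: /\_i S_i = \/ {S in Den_l(R,0) | S <= \bigcap_i S_i} *)
  (forall (I : Type) (Si : I -> set R), (forall i, Den_l0 R (Si i)) ->
     forall S : set R,
       Den_lub [set T | Den_l0 R T /\ T `<=` \bigcap_(i in setT) Si i] S ->
       Den_glb (range Si) S).
Proof.
split; first exact: Den_l0_1.
split; first by move=> S1 S2 D1 D2; have [] := Den_lub_prod D1 D2.
split; first by move=> S1 S2 S3 *; rewrite /den_prod gen_genUl gen_genUr setUA.
split; first by move=> S1 S2 *; rewrite /den_prod setUC.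
split.
  move=> S /Den_l0P [S1 SM _ _].
  have unit_absorb : [set 1] `|` S = S by apply: setUidr => _ ->.
  by rewrite /den_prod (setUC S) unit_absorb gen_id.
split.
  move=> I Si SiDen; split; first by apply: Den_lub_exists => _ [i _ <-].
  have [S S_lub] := @Den_lub_exists _
    [set T | Den_l0 R T /\ T `<=` \bigcap_(i in setT) Si i] (fun T => @proj1 _ _).
  by exists S; exact: Den_glb_lub_lower.
split; first exact: Den_lub_prod.
by move=> I Si SiDen S; exact: Den_glb_lub_lower.
Qed.
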